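(* Let $k\ge 4$ be an integer and let $f_k(X)=X^k-X^{k-1}-\cdots-X-1$. Let $\alpha_k$ denote the unique root of $f_k$ with $|\alpha_k|>1$ (it is real and greater than $1$), and let $\rho_1>\rho_2>\cdots>\rho_K$ be the distinct absolute values of the remaining roots of $f_k$ (all of which lie inside the unit disk). Then $$\frac{\rho_i}{\rho_j}>1+\frac{1}{10\,k^{9.6}\,(\pi/e)^k}\qquad\text{for all }1\le i<j\le K.$$
   Context: $f_k(X)=X^k-X^{k-1}-\cdots-X-1$ is the characteristic polynomial of the $k$-generalized Fibonacci sequence. It has exactly one root outside the closed unit disk, which is real and larger than $1$; all other roots have absolute value less than $1$. *)

From Stdlib Require Import Reals.
From Coquelicot Require Import Coquelicot.
Open Scope R_scope.

Fixpoint geom_sum (z : C) (n : nat) : C :=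
  match n with
  | O => RtoC 0
  | S m => Cplus (geom_sum z m) (Cpow z m)
  end.

Definition fk_eval (k : nat) (z : C) : C :=
  Cminus (Cpow z k) (geom_sum z k).

Definition is_root_fk (k : nat) (z : C) : Prop := fk_eval k z = RtoC 0.

(* Multiplying by X - 1, every root of f_k satisfies z^k (2 - z) = 1.
   Two distinct such roots z, w in the closed unit disk are far apart: the
   identity z^k - w^k = z^k w^k (z - w), compared with the first-order Taylor
   expansion of z^k - w^k, gives |z|^(k-1) <= (k-1) |z - w|, while |z|^k >= 1/3.
   On the other hand |2 - z|^2 = 4 - 4 Re z + |z|^2 = |z|^(-2k) ties Re z to |z|,
   so two such roots with close moduli in the same closed half-plane are close:
   |z - w|^2 <= 65 k^2 (|z| - |w|); conjugating w reduces to that case.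
   Together, |z| - |w| >= 1/(585 k^4), far more than the claimed gap. *)

From Stdlib Require Import Reals Lra Psatz Lia.
From Coquelicot Require Import Coquelicot.
Open Scope R_scope.

Lemma pow_le_1 (x : R) (n : nat) : 0 <= x <= 1 -> x ^ n <= 1.
Proof.
  intro Hx. induction n as [|n IH]; simpl; [lra|].
  pose proof (pow_le x n (proj1 Hx)). nra.
Qed.

Lemma pow_sub_pow_le (r s : R) (n : nat) : 0 <= s <= r ->
  r ^ S n - s ^ S n <= INR (S n) * r ^ n * (r - s).
Proof.
  intro Hsr. induction n as [|n IH]; [simpl; lra|].
  replace (r ^ S (S n) - s ^ S (S n))
    with (r * (r ^ S n - s ^ S n) + s ^ S n * (r - s)) by (simpl; ring).
  pose proof (pow_incr s r (S n) Hsr).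
  pose proof (pow_le s (S n) (proj1 Hsr)).
  rewrite S_INR. simpl in *. nra.
Qed.

Lemma INR_ge_4 (k : nat) : (4 <= k)%nat -> 4 <= INR k.
Proof. intro Hk. apply le_INR in Hk. simpl in Hk. lra. Qed.

Lemma geom_sum_mul_sub1 (z : C) (n : nat) :
  ((z - 1) * geom_sum z n = z ^ n - 1)%C.
Proof.
  induction n as [|n IH]; simpl.
  - ring.
  - rewrite Cmult_plus_distr_l, IH. ring.
Qed.

Lemma is_root_fk_pow_mul (k : nat) (z : C) :
  is_root_fk k z -> (z ^ k * (2 - z) = 1)%C.
Proof.
  unfold is_root_fk, fk_eval. intro H.
  transitivity (1 - (z - 1) * z ^ k + (z - 1) * geom_sum z k)%C.
  - rewrite geom_sum_mul_sub1. ring.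
  - replace (1 - (z - 1) * z ^ k + (z - 1) * geom_sum z k)%C
      with (1 - (z - 1) * (z ^ k - geom_sum z k))%C by ring.
    rewrite H. ring.
Qed.

Lemma Cconj_pow_mul_root (k : nat) (z : C) :
  (z ^ k * (2 - z) = 1)%C -> (Cconj z ^ k * (2 - Cconj z) = 1)%C.
Proof.
  intro H. apply (f_equal Cconj) in H.
  rewrite Cmult_conj, Cpow_conj, Cminus_conj in H.
  replace (Cconj 2) with (RtoC 2) in H by (apply injective_projections; simpl; ring).
  rewrite H. apply injective_projections; simpl; ring.
Qed.

Lemma Cmod_2_sub_le (z : C) : Cmod (2 - z) <= 2 + Cmod z.
Proof.
  eapply Rle_trans; [apply Cmod_triangle|].
  rewrite Cmod_opp, Cmod_R, Rabs_pos_eq by lra. lra.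
Qed.

Lemma Cmod_2_sub_sq (z : C) : Cmod (2 - z) ^ 2 = 4 - 4 * Re z + Cmod z ^ 2.
Proof. rewrite !Cmod2_alt. destruct z as [a b]. simpl. ring. Qed.

Section RootsOfXk2X.

Variable k : nat.

Lemma root_Cmod_pow_mul (z : C) : (z ^ k * (2 - z) = 1)%C ->
  Cmod z ^ k * Cmod (2 - z) = 1.
Proof. intro H. rewrite <- Cmod_pow, <- Cmod_mult, H. apply Cmod_1. Qed.

Lemma root_Cmod_pow_ge (z : C) : (z ^ k * (2 - z) = 1)%C -> Cmod z <= 1 ->
  1 / 3 <= Cmod z ^ k.
Proof.
  intros H Hz. pose proof (root_Cmod_pow_mul z H). pose proof (Cmod_2_sub_le z).
  pose proof (pow_le (Cmod z) k (Cmod_ge_0 z)). nra.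
Qed.

Lemma root_Cmod_pos (z : C) : (1 <= k)%nat -> (z ^ k * (2 - z) = 1)%C ->
  0 < Cmod z.
Proof.
  intros Hk H. pose proof (root_Cmod_pow_mul z H) as Hm.
  destruct (Cmod_ge_0 z) as [|H0]; [assumption|].
  rewrite <- H0, pow_i in Hm by lia. lra.
Qed.

Lemma root_Cmod_ge (z : C) : (4 <= k)%nat -> (z ^ k * (2 - z) = 1)%C ->
  Cmod z <= 1 -> 3 / 4 <= Cmod z.
Proof.
  intros Hk H Hz. pose proof (root_Cmod_pow_ge z H Hz) as H3.
  set (r := Cmod z) in *. pose proof (Cmod_ge_0 z) as Hr. fold r in Hr.
  replace k with (4 + (k - 4))%nat in H3 by lia. rewrite pow_add in H3.
  pose proof (pow_le_1 r (k - 4) (conj Hr Hz)).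
  pose proof (pow_le r (k - 4) Hr).
  destruct (Rle_lt_dec (3 / 4) r) as [|Hlt]; [assumption|].
  pose proof (pow_incr r (3 / 4) 4 (conj Hr (Rlt_le _ _ Hlt))).
  simpl in *. nra.
Qed.

Lemma roots_pow_sub (z w : C) :
  (z ^ k * (2 - z) = 1)%C -> (w ^ k * (2 - w) = 1)%C ->
  (z ^ k - w ^ k = z ^ k * w ^ k * (z - w))%C.
Proof.
  intros Hz Hw.
  transitivity (z ^ k * (w ^ k * (2 - w)) - w ^ k * (z ^ k * (2 - z)))%C.
  - rewrite Hz, Hw. ring.
  - ring.
Qed.

End RootsOfXk2X.

Section UnitDiskPowers.

Variables z w : C.
Hypothesis Hz : Cmod z <= 1.
Hypothesis Hw : Cmod w <= 1.

Lemma Cmod_Cpow_sub_le (n : nat) :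
  Cmod (z ^ n - w ^ n) <= INR n * Cmod (z - w).
Proof.
  induction n as [|n IH].
  - simpl. replace (1 - 1)%C with (RtoC 0) by ring. rewrite Cmod_0. lra.
  - replace (z ^ S n - w ^ S n)%C with (z * (z ^ n - w ^ n) + w ^ n * (z - w))%C
      by (simpl; ring).
    eapply Rle_trans; [apply Cmod_triangle|].
    rewrite !Cmod_mult, Cmod_pow, S_INR.
    pose proof (Cmod_ge_0 w). pose proof (Cmod_ge_0 (z - w)).
    pose proof (Cmod_ge_0 (z ^ n - w ^ n)).
    pose proof (pow_le_1 (Cmod w) n (conj (Cmod_ge_0 w) Hw)).
    pose proof (pow_le (Cmod w) n (Cmod_ge_0 w)).
    nra.
Qed.

Lemma Cmod_Cpow_taylor_le (m : nat) :
  Cmod (z ^ S m - w ^ S m - INR (S m) * z ^ m * (z - w))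
    <= INR m ^ 2 * Cmod (z - w) ^ 2.
Proof.
  induction m as [|m IH].
  - simpl. replace (z * 1 - w * 1 - 1 * 1 * (z - w))%C with (RtoC 0) by ring.
    rewrite Cmod_0. lra.
  - set (E := (z ^ S m - w ^ S m - INR (S m) * z ^ m * (z - w))%C) in IH.
    replace (z ^ S (S m) - w ^ S (S m) - INR (S (S m)) * z ^ S m * (z - w))%C
      with (z * E - (z ^ S m - w ^ S m) * (z - w))%C
      by (unfold E; rewrite (S_INR (S m)), RtoC_plus; simpl; ring).
    unfold Cminus at 1. eapply Rle_trans; [apply Cmod_triangle|].
    rewrite Cmod_opp, !Cmod_mult.
    pose proof (Cmod_Cpow_sub_le (S m)) as Hpow.
    pose proof (Cmod_ge_0 E). pose proof (Cmod_ge_0 (z - w)).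
    pose proof (pos_INR m). rewrite S_INR in *.
    nra.
Qed.

End UnitDiskPowers.

Lemma roots_separated (m : nat) (z w : C) : (1 <= m)%nat ->
  (z ^ S m * (2 - z) = 1)%C -> (w ^ S m * (2 - w) = 1)%C ->
  Cmod z <= 1 -> Cmod w <= 1 -> z <> w ->
  1 <= 3 * INR m * Cmod (z - w).
Proof.
  intros Hm Hz Hw Hz1 Hw1 Hne.
  assert (Hd : 0 < Cmod (z - w)).
  { apply Cmod_gt_0. intro H0. apply Hne.
    replace z with (z - w + w)%C by ring. rewrite H0. ring. }
  assert (Hlin : INR (S m) * Cmod z ^ m * Cmod (z - w)
      <= Cmod z ^ S m * Cmod w ^ S m * Cmod (z - w) + INR m ^ 2 * Cmod (z - w) ^ 2).
  { pose proof (Cmod_Cpow_taylor_le z w Hz1 Hw1 m) as Ht.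
    rewrite (roots_pow_sub (S m) z w Hz Hw) in Ht.
    set (A := (INR (S m) * z ^ m * (z - w))%C) in Ht.
    set (B := (z ^ S m * w ^ S m * (z - w))%C) in Ht.
    replace (INR (S m) * Cmod z ^ m * Cmod (z - w)) with (Cmod A)
      by (unfold A; rewrite !Cmod_mult, Cmod_pow, Cmod_R, Rabs_pos_eq by apply pos_INR; ring).
    replace (Cmod z ^ S m * Cmod w ^ S m * Cmod (z - w)) with (Cmod B)
      by (unfold B; rewrite !Cmod_mult, !Cmod_pow; ring).
    replace A with (B - (B - A))%C by ring.
    unfold Cminus at 1. eapply Rle_trans; [apply Cmod_triangle|].
    rewrite Cmod_opp. lra. }
  set (r := Cmod z) in *. set (s := Cmod w) in *. set (d := Cmod (z - w)) in *.
  pose proof (root_Cmod_pow_ge (S m) z Hz Hz1) as H3. fold r in H3.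
  assert (Hr : 0 <= r) by apply Cmod_ge_0.
  assert (Hs : 0 <= s) by apply Cmod_ge_0.
  pose proof (pow_le r m Hr).
  pose proof (pow_le_1 s (S m) (conj Hs Hw1)).
  pose proof (pow_le s (S m) Hs).
  assert (HmR : 1 <= INR m) by (apply (le_INR 1); exact Hm).
  assert (Hrs : r ^ S m * s ^ S m <= r ^ m) by (simpl in *; nra).
  assert (Hrm : r ^ m <= INR m * d).
  { rewrite S_INR in Hlin.
    assert (INR m * d * r ^ m <= INR m * d * (INR m * d)) by nra.
    apply Rmult_le_reg_l with (INR m * d); [nra | lra]. }
  assert (r ^ S m <= r ^ m) by (simpl; nra).
  lra.
Qed.

Lemma sqr_sub_le_Rabs_sub_sqr (b e : R) : 0 <= b * e ->
  (b - e) ^ 2 <= Rabs (b ^ 2 - e ^ 2).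
Proof.
  intro Hbe. destruct (Rle_dec (b ^ 2) (e ^ 2)).
  - rewrite Rabs_left1 by lra. nra.
  - rewrite Rabs_right by lra. nra.
Qed.

Section GapEstimate.

Variable k : nat.
Variables z w : C.
Hypothesis Hk : (4 <= k)%nat.
Hypothesis Hz : (z ^ k * (2 - z) = 1)%C.
Hypothesis Hw : (w ^ k * (2 - w) = 1)%C.
Hypothesis Hz1 : Cmod z <= 1.
Hypothesis Hwz : Cmod w <= Cmod z.

(* |2 - z|^2 = |z|^(-2k), so this difference is governed by |z|^(2k) - |w|^(2k). *)
Lemma roots_Cmod_2_sub_sq_sub :
  0 <= Cmod (2 - w) ^ 2 - Cmod (2 - z) ^ 2 <= 24 * INR k * (Cmod z - Cmod w).
Proof.
  pose proof (root_Cmod_ge k z Hk Hz Hz1) as Hr34.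
  pose proof (root_Cmod_pow_mul k z Hz) as Mz.
  pose proof (root_Cmod_pow_mul k w Hw) as Mw.
  pose proof (Cmod_2_sub_le w) as Hgw3.
  destruct k as [|m]; [lia|].
  set (r := Cmod z) in *. set (s := Cmod w) in *.
  set (gz := Cmod (2 - z)) in *. set (gw := Cmod (2 - w)) in *.
  assert (Hs : 0 <= s) by apply Cmod_ge_0.
  assert (Hgz : 0 <= gz) by apply Cmod_ge_0.
  assert (Hgw : 0 <= gw) by apply Cmod_ge_0.
  set (x := r ^ S m) in *. set (y := s ^ S m) in *.
  assert (Hy : 0 <= y) by (apply pow_le; lra).
  assert (Hyx : y <= x) by (apply pow_incr; lra).
  assert (Hxy : x - y <= INR (S m) * r ^ m * (r - s)) by (apply pow_sub_pow_le; lra).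
  assert (Hdiff : gw ^ 2 - gz ^ 2 = gw ^ 2 * gz ^ 2 * ((x - y) * (x + y))).
  { transitivity (gw ^ 2 * (x * gz) ^ 2 - gz ^ 2 * (y * gw) ^ 2).
    - rewrite Mz, Mw. ring.
    - ring. }
  assert (Hq : gz ^ 2 * x * r ^ m * r = 1).
  { transitivity ((x * gz) ^ 2); [unfold x; simpl; ring|]. rewrite Mz. ring. }
  assert (Hq43 : gz ^ 2 * x * r ^ m <= 4 / 3) by nra.
  assert (Hgw9 : gw ^ 2 <= 9) by nra.
  rewrite Hdiff. split.
  - apply Rmult_le_pos; [nra|]. apply Rmult_le_pos; lra.
  - assert (Hprod : (x - y) * (x + y) <= INR (S m) * r ^ m * (r - s) * (2 * x)).
    { apply Rmult_le_compat; lra. }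
    assert (Hk0 : 0 <= INR (S m) * (r - s)) by (pose proof (pos_INR (S m)); nra).
    apply Rle_trans with (2 * INR (S m) * (r - s) * (gw ^ 2 * (gz ^ 2 * x * r ^ m))).
    + replace (2 * INR (S m) * (r - s) * (gw ^ 2 * (gz ^ 2 * x * r ^ m)))
        with (gw ^ 2 * gz ^ 2 * (INR (S m) * r ^ m * (r - s) * (2 * x))) by ring.
      apply Rmult_le_compat_l; [nra | exact Hprod].
    + assert (gw ^ 2 * (gz ^ 2 * x * r ^ m) <= 9 * (4 / 3))
        by (apply Rmult_le_compat; nra).
      nra.
Qed.

Lemma roots_Re_sub_le :
  0 <= Re z - Re w <= 7 * INR k * (Cmod z - Cmod w).
Proof.
  pose proof (roots_Cmod_2_sub_sq_sub) as HG.
  rewrite !Cmod_2_sub_sq in HG.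
  pose proof (INR_ge_4 k Hk) as HK.
  pose proof (Cmod_ge_0 w).
  nra.
Qed.

Lemma roots_Cmod_sub_sq_le : 0 <= Im z * Im w ->
  Cmod (z - w) ^ 2 <= 65 * INR k ^ 2 * (Cmod z - Cmod w).
Proof.
  intro Him.
  pose proof (roots_Re_sub_le) as Hre.
  pose proof (sqr_sub_le_Rabs_sub_sqr (Im z) (Im w) Him) as Him2.
  pose proof (INR_ge_4 k Hk) as HK.
  assert (Hapc : Rabs (Re z + Re w) <= 2).
  { eapply Rle_trans; [apply Rabs_triang|].
    pose proof (re_le_Cmod z). pose proof (re_le_Cmod w). lra. }
  assert (Hre2 : Rabs (Re z ^ 2 - Re w ^ 2) <= 2 * (Re z - Re w)).
  { replace (Re z ^ 2 - Re w ^ 2) with ((Re z - Re w) * (Re z + Re w)) by ring.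
    rewrite Rabs_mult, (Rabs_pos_eq (Re z - Re w)), (Rmult_comm 2) by lra.
    apply Rmult_le_compat_l; lra. }
  assert (Him3 : Rabs (Im z ^ 2 - Im w ^ 2)
      <= Cmod z ^ 2 - Cmod w ^ 2 + Rabs (Re z ^ 2 - Re w ^ 2)).
  { replace (Im z ^ 2 - Im w ^ 2)
      with (Cmod z ^ 2 - Cmod w ^ 2 - (Re z ^ 2 - Re w ^ 2)) by (rewrite !Cmod2_alt; ring).
    unfold Rminus at 1. eapply Rle_trans; [apply Rabs_triang|].
    rewrite Rabs_Ropp, (Rabs_pos_eq (Cmod z ^ 2 - Cmod w ^ 2)); [lra|].
    pose proof (Cmod_ge_0 w). nra. }
  replace (Cmod (z - w) ^ 2) with ((Re z - Re w) ^ 2 + (Im z - Im w) ^ 2)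
    by (rewrite Cmod2_alt; destruct z, w; simpl; ring).
  set (d := Cmod z - Cmod w) in *.
  assert (Hd : 0 <= d <= 1) by (pose proof (Cmod_ge_0 w); unfold d; lra).
  assert (Hrs : Cmod z ^ 2 - Cmod w ^ 2 <= 2 * d) by (pose proof (Cmod_ge_0 w); unfold d; nra).
  assert (Hre3 : (Re z - Re w) ^ 2 <= 49 * INR k ^ 2 * d).
  { apply Rle_trans with ((7 * INR k * d) ^ 2); [apply pow_incr; lra|].
    assert (0 <= 49 * INR k ^ 2 * d * (1 - d)) by (apply Rmult_le_pos; nra).
    nra. }
  nra.
Qed.

End GapEstimate.

Lemma roots_Cmod_gap (k : nat) (z w : C) : (4 <= k)%nat ->
  (z ^ k * (2 - z) = 1)%C -> (w ^ k * (2 - w) = 1)%C ->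
  Cmod z <= 1 -> Cmod w < Cmod z ->
  1 <= 585 * INR k ^ 4 * (Cmod z - Cmod w).
Proof.
  intros Hk Hz Hw Hz1 Hwz.
  assert (Hsame_half : forall w', (w' ^ k * (2 - w') = 1)%C -> Cmod w' = Cmod w ->
      0 <= Im z * Im w' -> 1 <= 585 * INR k ^ 4 * (Cmod z - Cmod w)).
  { intros w' Hw' Hmod Him. rewrite <- Hmod in *.
    destruct k as [|m]; [lia|].
    assert (Hne : z <> w') by (intros ->; lra).
    pose proof (roots_separated m z w' ltac:(lia) Hz Hw' Hz1 ltac:(lra) Hne) as Hsep.
    pose proof (roots_Cmod_sub_sq_le (S m) z w' Hk Hz Hw' Hz1 ltac:(lra) Him) as Hsq.
    assert (Hm : INR m <= INR (S m)) by (rewrite S_INR; lra).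
    pose proof (Cmod_ge_0 (z - w')).
    assert (H1 : 1 <= (3 * INR (S m) * Cmod (z - w')) ^ 2).
    { apply pow_R1_Rle. pose proof (pos_INR m). nra. }
    nra. }
  destruct (Rle_dec 0 (Im z * Im w)).
  - apply (Hsame_half w); auto.
  - apply (Hsame_half (Cconj w)).
    + apply Cconj_pow_mul_root, Hw.
    + apply Cmod_conj.
    + rewrite im_conj. lra.
Qed.

Lemma gap_constant_lt (k : nat) : (4 <= k)%nat ->
  585 * INR k ^ 4 < 10 * Rpower (INR k) (96 / 10) * (PI / exp 1) ^ k.
Proof.
  intro Hk. pose proof (INR_ge_4 k Hk) as HK.
  assert (Hpow : INR k ^ 9 <= Rpower (INR k) (96 / 10)).
  { rewrite <- Rpower_pow by lra. apply Rle_Rpower; [lra|]. simpl. lra. }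
  assert (Hpie : 1 <= (PI / exp 1) ^ k).
  { apply pow_R1_Rle. pose proof PI2_3_2. pose proof exp_le_3. pose proof (exp_pos 1).
    apply Rmult_le_reg_r with (exp 1); [lra|].
    unfold Rdiv. rewrite Rmult_assoc, Rinv_l by lra. lra. }
  assert (Hk5 : 4 ^ 5 <= INR k ^ 5) by (apply pow_incr; lra).
  assert (Hk4 : 0 < INR k ^ 4) by (apply pow_lt; lra).
  assert (585 * INR k ^ 4 < 10 * INR k ^ 9)
    by (replace (INR k ^ 9) with (INR k ^ 4 * INR k ^ 5) by ring; nra).
  assert (0 < Rpower (INR k) (96 / 10)) by apply exp_pos.
  nra.
Qed.

Theorem theorem1 (k : nat) (Hk : (4 <= k)%nat) (z w : C)
  (Hz : is_root_fk k z) (Hw : is_root_fk k w)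
  (Hz1 : ~ (1 < Cmod z)) (Hw1 : ~ (1 < Cmod w))
  (Hzw : Cmod w < Cmod z) :
  Cmod z / Cmod w >
    1 + 1 / (10 * Rpower (INR k) (96 / 10) * (PI / exp 1) ^ k).
Proof.
  apply is_root_fk_pow_mul in Hz. apply is_root_fk_pow_mul in Hw.
  pose proof (roots_Cmod_gap k z w Hk Hz Hw ltac:(lra) Hzw) as Hgap.
  pose proof (gap_constant_lt k Hk) as Hconst.
  pose proof (root_Cmod_pos k w ltac:(lia) Hw) as Hs.
  assert (HK4 : 0 < 585 * INR k ^ 4) by (pose proof (INR_ge_4 k Hk); nra).
  assert (Hgap' : 1 / (10 * Rpower (INR k) (96 / 10) * (PI / exp 1) ^ k)
      < Cmod z - Cmod w).
  { apply Rlt_le_trans with (1 / (585 * INR k ^ 4)).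
    - unfold Rdiv. rewrite !Rmult_1_l. apply Rinv_lt_contravar; nra.
    - apply Rmult_le_reg_l with (585 * INR k ^ 4); [lra|].
      unfold Rdiv. rewrite Rmult_1_l, Rinv_r by lra. lra. }
  assert (Hratio : 1 + (Cmod z - Cmod w) <= Cmod z / Cmod w).
  { apply Rmult_le_reg_r with (Cmod w); [lra|].
    unfold Rdiv. rewrite Rmult_assoc, Rinv_l by lra. nra. }
  lra.
Qed.
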